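(* Consider the networked SIR epidemic-opinion model described in the context, under the standing assumption stated there, and let $(s_e,\mathbf 0,o_e)$ with $s_e\in[0,1]^n$ and $o_e=(\bar L+I_n)^{-1}(\mathbf 1_n-s_e)$ be an equilibrium. Then the opinions are in consensus, i.e. $[o_e]_i=[o_e]_j$ for all $i\ne j$, if and only if all communities have the same proportion of infections, i.e. $[s_e]_i=[s_e]_j$ for all $i\neq j$; in this case the equilibrium is $(s_e,\mathbf 0,\mathbf 1_n-s_e)$.
   Context: There are $n$ communities. For $t\ge0$ and $i\in[n]$, $s_i(t),x_i(t),o_i(t)\in[0,1]$ denote the susceptible proportion, infected proportion and opinion of community $i$. The disease transmission network is a directed graph $\mathcal G=(\mathcal V,\mathcal E)$ on $n$ nodes with edge weights $\beta_{ij}>0$ if $(v_j,v_i)\in\mathcal E$ (and $\beta_{ij}=0$ otherwise); $\mathcal N_i=\{v_j:(v_j,v_i)\in\mathcal E\}$. The opinion network is a directed graph $\bar{\mathcal G}$ on the same nodes with nonnegative weights $\bar a_{ij}$ and Laplacian $\bar L=\mathrm{diag}(k_1,\dots,k_n)-\bar A$, where $[\bar A]_{ij}=\bar a_{ij}$ and $k_i=\sum_j \bar a_{ij}$. Parameters: $\beta_{\min}>0$, $\gamma_{\min}>0$, recovery rates $\gamma_i$. The model is $\dot s_i=-s_i\sum_{j\in\mathcal N_i}\big(\beta_{ij}-(\beta_{ij}-\beta_{\min})o_i\big)x_j$, $\dot x_i=s_i\sum_{j\in\mathcal N_i}\big(\beta_{ij}-(\beta_{ij}-\beta_{\min})o_i\big)x_j-\big(\gamma_{\min}+(\gamma_i-\gamma_{\min})o_i\big)x_i$,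 $\dot o=(\mathbf 1_n-s)-(\bar L+I_n)o$. Standing assumption: $\gamma_i\ge\gamma_{\min}>0$, $\beta_{ij}\ge\beta_{\min}>0$ for all $j\in\mathcal N_i$, and both $\mathcal G$ and $\bar{\mathcal G}$ are strongly connected. *)

From mathcomp Require Import all_boot all_order all_algebra.
Set Implicit Arguments. Unset Strict Implicit. Unset Printing Implicit Defensive.
Import Order.TTheory GRing.Theory Num.Theory.
Local Open Scope ring_scope.

Section Model.
Variables (R : realFieldType) (n : nat).

Definition laplacian (A : 'M[R]_n) : 'M[R]_n :=
  diag_mx (\row_i \sum_j A i j) - A.

Definition strongly_connected (E : rel 'I_n) : Prop :=
  forall i j : 'I_n, connect E i j.

Definition trans_edge (beta : 'M[R]_n) : rel 'I_n := fun j i => 0 < beta i j.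
Definition opin_edge (A : 'M[R]_n) : rel 'I_n := fun j i => 0 < A i j.

Definition pressure (beta : 'M[R]_n) (bmin : R) (o x : 'cV[R]_n) (i : 'I_n) : R :=
  \sum_(j | 0 < beta i j) (beta i j - (beta i j - bmin) * o i ord0) * x j ord0.

Definition s_dot beta bmin (s x o : 'cV[R]_n) : 'cV[R]_n :=
  \col_i (- s i ord0 * pressure beta bmin o x i).

Definition x_dot beta bmin (gmin : R) (gamma : 'I_n -> R) (s x o : 'cV[R]_n) : 'cV[R]_n :=
  \col_i (s i ord0 * pressure beta bmin o x i
          - (gmin + (gamma i - gmin) * o i ord0) * x i ord0).

Definition o_dot (A : 'M[R]_n) (s o : 'cV[R]_n) : 'cV[R]_n :=
  (const_mx 1 - s) - (laplacian A + 1%:M) *m o.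

Definition is_equilibrium beta bmin gmin gamma A (s x o : 'cV[R]_n) : Prop :=
  [/\ s_dot beta bmin s x o = 0,
      x_dot beta bmin gmin gamma s x o = 0 &
      o_dot A s o = 0].

End Model.

From mathcomp Require Import all_boot all_order all_algebra.
From mathcomp Require Import lra.
Set Implicit Arguments. Unset Strict Implicit. Unset Printing Implicit Defensive.
Import Order.TTheory GRing.Theory Num.Theory.
Local Open Scope ring_scope.

(* Only the opinion equation (L + I) o_e = 1 - s_e and the nonnegativity of the
   opinion weights matter.  The Laplacian annihilates consensus vectors, so
   L + I fixes them; and L + I is injective by a maximum principle: at a
   coordinate where v is largest, ((L + I) v)_i = v_i + sum_j a_ij (v_i - v_j)
   >= v_i, so (L + I) v = 0 forces v <= 0, and likewise -v <= 0.  Hence o_e is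
   in consensus iff o_e = 1 - s_e iff s_e is in consensus. *)

Section ShiftedLaplacian.
Variables (R : realFieldType) (n : nat) (A : 'M[R]_n).

Definition consensus (v : 'cV[R]_n) : Prop :=
  forall i j : 'I_n, i != j -> v i ord0 = v j ord0.

Lemma consensus_const_mxB (c : R) (v : 'cV[R]_n) :
  consensus (const_mx c - v) <-> consensus v.
Proof.
by split=> hv i j ne; move: (hv i j ne); rewrite ?mxE => /eqP;
  rewrite ?(inj_eq (addrI c)) ?(inj_eq oppr_inj) => /eqP ->.
Qed.

Lemma laplacian_mulmxE (v : 'cV[R]_n) (i : 'I_n) :
  (laplacian A *m v) i ord0 = \sum_j A i j * (v i ord0 - v j ord0).
Proof.
rewrite mulmxBl mul_diag_mx !mxE big_distrl -sumrB.
by apply: eq_bigr => j _; rewrite mulrBr.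
Qed.

Lemma laplacian_consensus (v : 'cV[R]_n) : consensus v -> laplacian A *m v = 0.
Proof.
move=> hv; apply/matrixP => i l; rewrite (ord1 l) laplacian_mulmxE mxE.
apply: big1 => j _; case: (eqVneq i j) => [->|ne]; last rewrite (hv i j ne).
all: by rewrite subrr mulr0.
Qed.

Lemma laplacian1_consensus (v : 'cV[R]_n) :
  consensus v -> (laplacian A + 1%:M) *m v = v.
Proof. by move=> hv; rewrite mulmxDl laplacian_consensus // mul1mx add0r. Qed.

Hypothesis A_ge0 : forall i j, 0 <= A i j.

Lemma laplacian1_kernel_le0 (v : 'cV[R]_n) :
  (laplacian A + 1%:M) *m v = 0 -> forall k, v k ord0 <= 0.
Proof.
move=> hv k.
have [i _ v_max] := @arg_maxP _ _ 'I_n k xpredT (fun i => v i ord0) isT.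
apply: le_trans (v_max k isT) _.
have := congr1 (fun M : 'cV[R]_n => M i ord0) hv.
rewrite /= mulmxDl mul1mx mxE laplacian_mulmxE mxE.
have : 0 <= \sum_j A i j * (v i ord0 - v j ord0).
  by apply: sumr_ge0 => j _; rewrite mulr_ge0 // subr_ge0; apply: v_max.
lra.
Qed.

Lemma laplacian1_inj :
  injective (mulmx (laplacian A + 1%:M) : 'cV[R]_n -> 'cV[R]_n).
Proof.
move=> v w hvw; apply/matrixP => k l; rewrite (ord1 l).
have ker (u u' : 'cV[R]_n) :
    (laplacian A + 1%:M) *m u = (laplacian A + 1%:M) *m u' -> (u - u') k ord0 <= 0.
  by move=> h; apply: laplacian1_kernel_le0; rewrite mulmxBr h subrr.
by have := ker _ _ hvw; have := ker _ _ (esym hvw); rewrite !mxE; lra.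
Qed.

End ShiftedLaplacian.

Theorem lemma4 (R : realFieldType) (n : nat)
  (beta : 'M[R]_n) (bmin gmin : R) (gamma : 'I_n -> R) (Abar : 'M[R]_n)
  (hbmin : 0 < bmin) (hgmin : 0 < gmin)
  (hgamma : forall i, gmin <= gamma i)
  (hbeta0 : forall i j, 0 <= beta i j)
  (hbeta : forall i j, 0 < beta i j -> bmin <= beta i j)
  (hA0 : forall i j, 0 <= Abar i j)
  (hG : strongly_connected (trans_edge beta))
  (hGbar : strongly_connected (opin_edge Abar))
  (se : 'cV[R]_n)
  (hse : forall i, 0 <= se i ord0 <= 1) :
  let oe := invmx (laplacian Abar + 1%:M) *m (const_mx 1 - se) in
  is_equilibrium beta bmin gmin gamma Abar se 0 oe ->
  ((forall i j : 'I_n, i != j -> oe i ord0 = oe j ord0) <->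
   (forall i j : 'I_n, i != j -> se i ord0 = se j ord0))
  /\ ((forall i j : 'I_n, i != j -> se i ord0 = se j ord0) ->
      oe = const_mx 1 - se).
Proof.
move=> oe [_ _ /eqP]; rewrite subr_eq0 => /eqP opinion_eq.
change ((consensus oe <-> consensus se) /\ (consensus se -> oe = const_mx 1 - se)).
have se_consensus_oe : consensus se -> oe = const_mx 1 - se.
  move=> hs; apply: (laplacian1_inj hA0).
  by rewrite -opinion_eq laplacian1_consensus // consensus_const_mxB.
split=> //; split.
- move=> oe_consensus; apply/(consensus_const_mxB 1).
  by rewrite opinion_eq laplacian1_consensus.
- by move=> hs; rewrite se_consensus_oe //; apply/consensus_const_mxB.
Qed.
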